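(* Let $A$ be a commutative ring and $L$ a finitely generated projective $A$-module of constant rank $1$. If $L_1,\dots,L_n$ are finitely many $A$-submodules of $L$ with $L=\bigcup_{k=1}^n L_k$, then $L=L_k$ for some $k$. *)

From HB Require Import structures.
From mathcomp Require Import all_boot all_order all_algebra.
Set Implicit Arguments. Unset Strict Implicit. Unset Printing Implicit Defensive.
Import GRing.Theory.
Local Open Scope ring_scope.

(* A commutative ring A (comPzRingType: the zero ring allowed),
   an A-module L : lmodType A. *)

Definition prime_ideal (A : comPzRingType) (p : A -> Prop) : Prop :=
  [/\ p 0,
      (forall x y, p x -> p y -> p (x + y)),
      (forall a x, p x -> p (a * x)),
      ~ p 1
    & (forall x y, p (x * y) -> p x \/ p y)].

Definition submodule (A : pzRingType) (L : lmodType A) (S : L -> Prop) : Prop :=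
  [/\ S 0,
      (forall u v, S u -> S v -> S (u + v))
    & (forall (a : A) u, S u -> S (a *: u))].

Definition fin_generated (A : pzRingType) (L : lmodType A) : Prop :=
  exists (n : nat) (g : 'I_n -> L),
    forall x : L, exists c : 'I_n -> A, x = \sum_(i < n) c i *: g i.

Definition projective (A : pzRingType) (L : lmodType A) : Prop :=
  forall (M N : lmodType A) (f : {linear M -> N}) (g : {linear L -> N}),
    (forall y : N, exists x : M, f x = y) ->
    exists h : {linear L -> M}, forall x : L, f (h x) = g x.

(* The localization L_p (p a prime ideal) is a free A_p-module of rank 1,
   written out elementwise: some x/1 is an A_p-basis of L_p, i.e.
   (generation)   every m/1 is an A_p-multiple (a/s) (x/1): s m = a x for
                  some s not in p (the extra annihilating factor of the
                  localization equality is absorbed into s);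
   (independence) if (a/1)(x/1) = 0 in L_p, i.e. t a x = 0 for some t not
                  in p, then a/1 = 0 in A_p, i.e. u a = 0 for some u not in p.
   (Any basis m/s of a rank-1 free module can be rescaled by the unit s/1, so
   requiring the basis to be of the form x/1 loses no generality.) *)
Definition loc_free_rank1 (A : comPzRingType) (L : lmodType A) (p : A -> Prop) : Prop :=
  exists x : L,
    (forall m : L, exists (s a : A), ~ p s /\ s *: m = a *: x) /\
    (forall a : A, (exists t : A, ~ p t /\ t *: (a *: x) = 0) ->
                   exists u : A, ~ p u /\ u * a = 0).

Definition const_rank1 (A : comPzRingType) (L : lmodType A) : Prop :=
  forall p : A -> Prop, prime_ideal p -> loc_free_rank1 L p.

From HB Require Import structures.
From mathcomp Require Import all_boot all_order all_algebra.
From mathcomp Require Import boolp classical_sets.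
Local Open Scope ring_scope.
Local Open Scope classical_set_scope.
Import GRing.Theory.
Set Implicit Arguments. Unset Strict Implicit.

(* Suppose no L_k is all of L.  Then each conductor (L_k : L) is a proper ideal,
   contained in a maximal ideal m_k.  Since L is locally cyclic, a
   prime-avoidance argument produces a single y in L whose image generates every
   localization L_{m_k}.  Say y lies in L_k; as L is finitely generated, some
   s outside m_k satisfies s L <= L_k, i.e. s lies in (L_k : L), which is
   contained in m_k: a contradiction. *)

Section Ideals.
Variable A : comPzRingType.
Implicit Types (I J m p : set A) (a b x y : A).

Definition ideal I : Prop :=
  [/\ I 0, (forall x y, I x -> I y -> I (x + y)) & (forall a x, I x -> I (a * x))].

Definition maximal_ideal m : Prop :=
  [/\ ideal m, ~ m 1 & forall J, ideal J -> m `<=` J -> ~ J 1 -> J `<=` m].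

Lemma prime_ideal_mul_notin p x y : prime_ideal p -> ~ p x -> ~ p y -> ~ p (x * y).
Proof. by case=> _ _ _ _ pM px py /pM[]. Qed.

Lemma prime_ideal_add_notin p x y : prime_ideal p -> ~ p x -> p y -> ~ p (x + y).
Proof.
case=> _ pD pZ _ _ px py pxy; apply: px.
by rewrite -(addrK y x); apply: pD pxy _; rewrite -mulN1r; apply: pZ.
Qed.

Lemma exists_common_notin_prime (T : eqType) (M : T -> set A) p (l : seq T) :
  prime_ideal p -> {in l, forall j, ideal (M j)} -> {in l, forall j, ~ M j `<=` p} ->
  exists2 e, ~ p e & {in l, forall j, M j e}.
Proof.
move=> pp; elim: l => [|k l IH] idM Mp; first by exists 1 => //; case: pp.
have [e pe Me] : exists2 e, ~ p e & {in l, forall j, M j e}.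
  by apply: IH => j jl; [apply: idM | apply: Mp]; exact: mem_behead.
have [a [Mka pa]] : exists a, M k a /\ ~ p a.
  by have /nonsubset[a []] := Mp k (mem_head k l); exists a.
exists (a * e); first exact: prime_ideal_mul_notin.
move=> j; rewrite in_cons => /predU1P[->|jl].
  by rewrite mulrC; case: (idM k (mem_head k l)) => _ _; apply.
have [_ _ MjZ] := idM j (mem_behead (s := k :: l) jl).
exact/MjZ/Me.
Qed.

Lemma maximal_ideal_coprime m e : maximal_ideal m -> ~ m e ->
  exists2 u, m u & exists c, u + c * e = 1.
Proof.
case=> [[m0 mD mZ] m1 mmax] me.
pose J := [set z | exists u c, m u /\ z = u + c * e].
have idJ : ideal J.
  split; first by exists 0, 0; rewrite mul0r addr0.
    move=> _ _ [u1 [c1 [mu1 ->]]] [u2 [c2 [mu2 ->]]].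
    by exists (u1 + u2), (c1 + c2); rewrite mulrDl addrACA; split; first exact: mD.
  move=> a _ [u [c [mu ->]]]; exists (a * u), (a * c).
  by rewrite mulrDr mulrA; split; first exact: mZ.
have mJ : m `<=` J by move=> z mz; exists z, 0; rewrite mul0r addr0.
have [u [c [mu e1]]] : J 1.
  apply: contrapT => J1; apply: me; apply: (mmax J idJ mJ J1).
  by exists 0, 1; rewrite add0r mul1r.
by exists u => //; exists c.
Qed.

Lemma maximal_ideal_prime m : maximal_ideal m -> prime_ideal m.
Proof.
move=> mm; have [[m0 mD mZ] m1 _] := mm; split=> // x y mxy.
have [mx|mx] := EM (m x); [by left | right].
have [u mu [c uce]] := maximal_ideal_coprime mm mx.
rewrite -[y]mul1r -uce mulrDl -mulrA.
by apply: mD; [rewrite mulrC | ]; apply: mZ.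
Qed.

Lemma maximal_ideal_sup I : ideal I -> ~ I 1 -> exists m, maximal_ideal m /\ I `<=` m.
Proof.
move=> idI I1.
(* set0 is admitted so that the empty chain has an upper bound *)
pose P : set (set A) := fun J => J = set0 \/ [/\ ideal J, I `<=` J & ~ J 1].
have [M [PM Mmax]] : exists M, P M /\ forall B, M `<` B -> ~ P B.
  apply: Zorn_bigcup => F FP Ftot.
  have [->|/set0P[z [X FX Xz]]] := eqVneq (\bigcup_(X in F) X) set0; first by left.
  have properF Y a : F Y -> Y a -> [/\ ideal Y, I `<=` Y & ~ Y 1].
    by move=> FY Ya; case: (FP Y FY) => // Y0; rewrite Y0 in Ya.
  have [[X0 _ _] IX _] := properF X z FX Xz.
  right; split; last 2 first.
  - by move=> x Ix; exists X => //; apply: IX.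
  - by move=> [Y FY Y1]; have [] := properF Y 1 FY Y1.
  split; first by exists X.
    move=> u v [Y1 FY1 Y1u] [Y2 FY2 Y2v].
    have [[_ D1 _] _ _] := properF _ _ FY1 Y1u.
    have [[_ D2 _] _ _] := properF _ _ FY2 Y2v.
    by have [/(_ u Y1u) ?|/(_ v Y2v) ?] := Ftot _ _ FY1 FY2;
      [exists Y2 => //; apply: D2 | exists Y1 => //; apply: D1].
  move=> a u [Y FY Yu]; have [[_ _ Z] _ _] := properF _ _ FY Yu.
  by exists Y => //; apply: Z.
case: PM => [M0|[idM IM M1]].
  have [I0 _ _] := idI.
  have MI : M `<` I by rewrite M0; split=> // /(_ 0 I0).
  by exfalso; apply: (Mmax I MI); right; split.
exists M; split=> //; split=> // J idJ MJ J1 x Jx; apply: contrapT => Mx.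
have MJ' : M `<` J by split=> // /(_ x Jx).
by apply: (Mmax J MJ'); right; split=> //; apply: subset_trans MJ.
Qed.

End Ideals.

Section LocalGenerators.
Variables (A : comPzRingType) (L : lmodType A).
Implicit Types (p q : set A) (S : set L) (x y z : L).

Definition conductor S : set A := [set a | forall x, S (a *: x)].

Lemma conductor_ideal S : submodule S -> ideal (conductor S).
Proof.
case=> S0 SD SZ; split.
- by move=> x; rewrite scale0r.
- by move=> a b Sa Sb x; rewrite scalerDl; apply: SD.
- by move=> a b Sb x; rewrite -scalerA; apply: SZ.
Qed.

(* y/1 generates the localization L_p. *)
Definition loc_gen p y : Prop := forall z, exists s b, ~ p s /\ s *: z = b *: y.

Lemma sub_loc_gen p q y : q `<=` p -> loc_gen p y -> loc_gen q y.
Proof. by move=> qp gy z; have [s [b [ps e]]] := gy z; exists s, b; split=> // /qp. Qed.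

Lemma loc_gen_add p y x a b :
  prime_ideal p -> loc_gen p y -> ~ p a -> p b -> loc_gen p (a *: y + b *: x).
Proof.
move=> pp gy pa pb z.
have [s [c [ps sx]]] := gy x; have [t [d [pt tz]]] := gy z.
have [_ _ pZ _ _] := pp.
pose w := s * a + c * b.
have pw : ~ p w := prime_ideal_add_notin pp (prime_ideal_mul_notin pp ps pa) (pZ c b pb).
have wy : s *: (a *: y + b *: x) = w *: y.
  rewrite scalerDr !scalerA [s * b]mulrC -[(b * s) *: x]scalerA sx.
  by rewrite scalerA -scalerDl [b * c]mulrC.
exists (w * t), (d * s); split; first exact: prime_ideal_mul_notin.
by rewrite -scalerA tz -[RHS]scalerA wy !scalerA mulrC.
Qed.

Lemma exists_common_loc_gen (T : eqType) (M : T -> set A) (l : seq T) :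
  {in l, forall j, maximal_ideal (M j)} -> {in l, forall j, exists y, loc_gen (M j) y} ->
  exists y, {in l, forall j, loc_gen (M j) y}.
Proof.
elim: l => [|k l IH] maxM genM; first by exists 0.
have [y gy] : exists y, {in l, forall j, loc_gen (M j) y}.
  by apply: IH => j jl; [apply: maxM | apply: genM]; exact: mem_behead.
have maxMk := maxM k (mem_head k l); have [x gx] := genM k (mem_head k l).
have maxMl j : j \in l -> maximal_ideal (M j).
  by move=> jl; apply: maxM; exact: mem_behead.
have [[j jl Mjk]|] := EM (exists2 j, j \in l & M j `<=` M k).
  exists y => i; rewrite in_cons => /predU1P[->|il]; last exact: gy.
  have [idMk Mk1 _] := maxMk; have [_ _ Mjmax] := maxMl j jl.
  exact: sub_loc_gen (Mjmax _ idMk Mjk Mk1) (gy j jl).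
move=> /forall2NP notsub.
have [e Mke Mle] : exists2 e, ~ M k e & {in l, forall j, M j e}.
  apply: exists_common_notin_prime (maximal_ideal_prime maxMk) _ _.
    by move=> j /maxMl[].
  by move=> j jl; have [] := notsub j.
have [u Mku [c uce]] := maximal_ideal_coprime maxMk Mke.
(* u + c e = 1 with u in M k and e in every other M j: the new generator
   behaves like x at M k and like y at each M j. *)
exists (u *: y + e *: x) => j; rewrite in_cons => /predU1P[->|jl].
  by rewrite addrC; apply: loc_gen_add (maximal_ideal_prime maxMk) gx Mke Mku.
apply: loc_gen_add (maximal_ideal_prime (maxMl j jl)) (gy j jl) _ (Mle j jl).
have [[_ D Z] Mj1 _] := maxMl j jl.
by move=> Mju; apply: Mj1; rewrite -uce; apply: D => //; apply: Z; apply: Mle.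
Qed.

Lemma conductor_not_sub_prime p S y : fin_generated L -> prime_ideal p -> submodule S ->
  S y -> loc_gen p y -> exists2 s, ~ p s & conductor S s.
Proof.
move=> [N [g spang]] pp [S0 SD SZ] Sy gy.
have [s sP] := choice (fun i : 'I_N => gy (g i)).
exists (\prod_i s i).
  apply: (big_ind (fun a => ~ p a)); first by case: pp.
    by move=> a b; apply: prime_ideal_mul_notin.
  by move=> i _; have [b []] := sP i.
move=> x; have [c ->] := spang x.
rewrite scaler_sumr; apply: (big_ind S) => // i _.
rewrite (bigD1 i) //= !scalerA -mulrA mulrC -scalerA.
by have [b [_ ->]] := sP i; do 2 apply: (SZ).
Qed.

End LocalGenerators.

Unset Implicit Arguments.

Theorem corollary4p10 (A : comPzRingType) (L : lmodType A) (n : nat)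
    (Ls : 'I_n -> L -> Prop) :
  fin_generated L -> projective L -> const_rank1 L ->
  (forall k, submodule (Ls k)) ->
  (forall x : L, exists k : 'I_n, Ls k x) ->
  exists k : 'I_n, forall x : L, Ls k x.
Proof.
move=> fgL _ rank1 subLs cover; apply: contrapT => noLk.
have proper k : ~ conductor (Ls k) 1.
  by move=> Lk1; apply: noLk; exists k => x; rewrite -[x]scale1r; apply: Lk1.
have [M maxM] :=
  choice (fun k : 'I_n => maximal_ideal_sup (conductor_ideal (subLs k)) (proper k)).
have [y gy] : exists y : L, {in enum 'I_n, forall k, loc_gen (M k) y}.
  apply: (exists_common_loc_gen (M := M)) => k _; first exact: (maxM k).1.
  by have [x [gx _]] := rank1 _ (maximal_ideal_prime ((maxM k).1)); exists x.
have [k Lky] := cover y.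
have [s Mks ks] := conductor_not_sub_prime fgL (maximal_ideal_prime ((maxM k).1))
  (subLs k) Lky (gy k (mem_enum _ _)).
exact: Mks ((maxM k).2 s ks).
Qed.
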